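(* Let $c>0$, $F>1$, $s>0$ be constants. There exist constants $\varepsilon,\alpha_2>0$ depending only on $c,F$ such that for all sufficiently large $n$: if $Z^t\le\varepsilon n$ and $\lambda^t\le F$, then $$\mathbb E[Z^{t+1}-Z^t\mid x^t,\lambda^t]\ge\alpha_2.$$
   Context: Consider the SA-$(1,\lambda)$-EA on a dynamic monotone function: a function $f:\{0,1\}^n\to\mathbb R$ is monotone if $f(x)>f(y)$ whenever $x\ne y$ and $x_i\ge y_i$ for all $i$; $(f^t)_{t\ge0}$ is a sequence of monotone functions, $f^t$ possibly chosen adversarially depending on $x^t$. The algorithm (with constants $c>0$, $s>0$, $F>1$) maintains $x^t\in\{0,1\}^n$, real $\lambda^t\ge1$; in generation $t$ it creates $\lfloor\lambda^t\rceil$ (nearest integer) offspring, each independently by flipping every bit of $x^t$ independently with probability $c/n$; $x^{t+1}$ is an offspring maximizing $f^t$ (ties uniformly at random); $\lambda^{t+1}=\max\{1,\lambda^t/F\}$ if $f^t(x^{t+1})>f^t(x^t)$, else $\lambda^{t+1}=F^{1/s}\lambda^t$. $Z^t$ is the number of zero-bits of $x^t$. *)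

From HB Require Import structures.
From mathcomp Require Import all_boot all_order all_algebra.
From mathcomp Require Import reals.
Set Implicit Arguments. Unset Strict Implicit. Unset Printing Implicit Defensive.
Import Order.TTheory GRing.Theory Num.Theory.
Local Open Scope ring_scope.

Definition bits (n : nat) := {ffun 'I_n -> bool}.

Definition zeros (n : nat) (x : bits n) : nat := #|[set i | ~~ x i]|.

Definition monotone_fun (R : realType) (n : nat) (f : bits n -> R) : Prop :=
  forall x y : bits n, x != y -> (forall i, y i <= x i)%N -> f y < f x.

(* nearest integer (halves rounded up), as a natural number; used for lambda >= 1 *)
Definition round_nat (R : realType) (l : R) : nat := Num.truncn (l + 2^-1).

(* probability that standard bit mutation with rate c/n turns x into y *)
Definition mut_prob (R : realType) (n : nat) (c : R) (x y : bits n) : R :=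
  \prod_(i < n) (if x i == y i then 1 - c / n%:R else c / n%:R).

Definition best_set (R : realType) (n k : nat) (f : bits n -> R)
  (ys : {ffun 'I_k -> bits n}) : {set 'I_k} :=
  [set i | [forall j, f (ys j) <= f (ys i)]].

(* Expected value of Z(x^{t+1}) when x^t = x and k offspring are created:
   offspring independent by standard bit mutation, x^{t+1} uniformly random
   among the offspring (indices) maximising f. *)
Definition exp_next_zeros (R : realType) (n : nat) (c : R) (k : nat)
  (f : bits n -> R) (x : bits n) : R :=
  \sum_(ys : {ffun 'I_k -> bits n})
     (\prod_(i < k) mut_prob c x (ys i)) *
     ((\sum_(i in best_set f ys) (zeros (ys i))%:R) / (#|best_set f ys|)%:R).

(* E[Z^{t+1} - Z^t | x^t = x, lambda^t = l] for the SA-(1,lambda)-EA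
   with fitness f^t = f *)
Definition drift_Z (R : realType) (n : nat) (c l : R) (f : bits n -> R)
  (x : bits n) : R :=
  exp_next_zeros c (round_nat l) f x - (zeros x)%:R.

From HB Require Import structures.
From mathcomp Require Import all_boot all_order all_algebra.
From mathcomp Require Import reals.
From mathcomp Require Import ring lra.
Import Order.TTheory GRing.Theory Num.Theory.
Local Open Scope ring_scope.
Set Implicit Arguments. Unset Strict Implicit.

(* Call an offspring a pure gain if it differs from the parent and no zero-bit
   was flipped.  If all [k] offspring are pure gains, the selected one has more
   zeros than the parent, whatever the fitness function; otherwise it loses at
   most the total number of flipped zero-bits, whose expectation is
   [k Z c / n = O(eps)].  An offspring is a pure gain with probability
   [(1 - c/n)^Z - (1 - c/n)^n], which is bounded below by a constant when
   [Z <= eps n], so the drift is at least [q^k - O(eps)] with [k <= F + 1/2]. *)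

Section ProductDistribution.
Variables (R : comNzRingType) (I J : finType) (D : I -> J -> R).

Lemma sum_ffun_prod_mul_prod (g : I -> J -> R) :
  \sum_(f : {ffun I -> J}) (\prod_i D i (f i)) * \prod_i g i (f i)
  = \prod_i \sum_y D i y * g i y.
Proof. by rewrite bigA_distr_bigA; apply: eq_bigr => f _; rewrite big_split. Qed.

Hypothesis D_sum1 : forall i, \sum_y D i y = 1.

Lemma sum_ffun_prod1 : \sum_(f : {ffun I -> J}) \prod_i D i (f i) = 1.
Proof. by rewrite -bigA_distr_bigA; apply: big1 => i _. Qed.

Lemma sum_ffun_prod_mul_coord (h : J -> R) (j : I) :
  \sum_(f : {ffun I -> J}) (\prod_i D i (f i)) * h (f j) = \sum_y D j y * h y.
Proof.
pose g i y := if i == j then h y else 1.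
transitivity (\sum_(f : {ffun I -> J}) (\prod_i D i (f i)) * \prod_i g i (f i)).
  by apply: eq_bigr => f _; rewrite /g -big_mkcond big_pred1_eq.
rewrite sum_ffun_prod_mul_prod (bigD1 j) //= [X in _ * X]big1 ?mulr1.
  by apply: eq_bigr => y _; rewrite /g eqxx.
by move=> i /negbTE ij; rewrite -(D_sum1 i); apply: eq_bigr => y _; rewrite /g ij mulr1.
Qed.

End ProductDistribution.

Lemma prodr_natb (R : comPzSemiRingType) (I : finType) (P : pred I) :
  \prod_i (P i)%:R = [forall i, P i]%:R :> R.
Proof.
case: (boolP [forall i, P i]) => [/forallP allP | /forallPn[i /negbTE nPi]].
  by rewrite big1 // => i _; rewrite allP.
by rewrite (bigD1 i) //= nPi mul0r.
Qed.

Lemma card_set_sumb (I : finType) (P : pred I) : #|[set i | P i]| = (\sum_i P i)%N.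
Proof. by rewrite cardsE -sum1_card big_mkcond. Qed.

Lemma le_mean (R : numFieldType) (I : finType) (A : {set I}) (g : I -> R) (a : R) :
  A != set0 -> (forall i, i \in A -> a <= g i) -> a <= (\sum_(i in A) g i) / #|A|%:R.
Proof.
move=> A0 ag; rewrite ler_pdivlMr ?ltr0n ?card_gt0 // mulr_natr -sumr_const.
exact: ler_sum.
Qed.

Section Bernoulli.
Variables (R : realFieldType) (p : R).
Hypotheses (p_ge0 : 0 <= p) (p_le1 : p <= 1).

Lemma bernoulli_subrX_ge (m : nat) : 1 - m%:R * p <= (1 - p) ^+ m.
Proof.
elim: m => [|m IH]; first by rewrite expr0 mul0r subr0.
rewrite exprS -natr1.
have : (1 - p) * (1 - m%:R * p) <= (1 - p) * (1 - p) ^+ m by rewrite ler_wpM2l ?subr_ge0.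
have : 0 <= m%:R * p * p by rewrite !mulr_ge0.
nra.
Qed.

Lemma bernoulli_subrX_mulD_le1 (m : nat) : (1 - p) ^+ m * (1 + m%:R * p) <= 1.
Proof.
elim: m => [|m IH]; first by rewrite expr0 mul0r addr0 mulr1.
rewrite exprS -natr1 -mulrA.
have step : (1 - p) * (1 + (m%:R + 1) * p) <= 1 + m%:R * p.
  have : 0 <= (m%:R + 1) * p * p by rewrite !mulr_ge0 ?addr_ge0.
  nra.
by apply: le_trans IH; rewrite mulrCA ler_wpM2l ?exprn_ge0 ?subr_ge0.
Qed.

End Bernoulli.

Definition lost_zeros n (x y : bits n) : nat := #|[set i | ~~ x i && y i]|.
Definition pure_gain n (x y : bits n) : bool := (lost_zeros x y == 0%N) && (y != x).

Section Bits.
Variables (n : nat) (x y : bits n).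

Lemma lost_zeros_eq0 : (lost_zeros x y == 0%N) = [forall i, x i || ~~ y i].
Proof.
rewrite /lost_zeros cards_eq0; apply/eqP/forallP => [/setP E i | E].
  by have := E i; rewrite !inE; case: (x i); case: (y i).
by apply/setP => i; have := E i; rewrite !inE; case: (x i); case: (y i).
Qed.

Lemma zeros_le_addl_lost : (zeros x <= zeros y + lost_zeros x y)%N.
Proof.
apply: leq_trans (leq_card_setU _ _); apply: subset_leq_card.
by apply/subsetP => i; rewrite !inE; case: (x i); case: (y i).
Qed.

Lemma pure_gain_zeros_lt : pure_gain x y -> (zeros x < zeros y)%N.
Proof.
rewrite /pure_gain lost_zeros_eq0 => /andP[/forallP yx y_neq_x].
apply: proper_card; apply/properP; split.
  by apply/subsetP => i; rewrite !inE; have := yx i; case: (x i); case: (y i).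
have [i yi_neq_xi] : exists i, y i != x i.
  apply/existsP; apply: contraNT y_neq_x; rewrite negb_exists => /forallP E.
  by apply/eqP/ffunP => i; apply/eqP; rewrite -[_ == _]negbK E.
by exists i; rewrite !inE; move: yi_neq_xi (yx i); case: (x i); case: (y i).
Qed.

End Bits.

Section Mutation.
Variables (R : realType) (n : nat) (c : R) (x : bits n).
Local Notation p := (c / n%:R).
Let bit_prob (i : 'I_n) (b : bool) : R := if x i == b then 1 - p else p.

Lemma bit_prob_sum1 i : \sum_b bit_prob i b = 1.
Proof. by rewrite big_bool /bit_prob; case: (x i) => /=; ring. Qed.

Lemma mut_prob_sum1 : \sum_y mut_prob c x y = 1.
Proof. exact: (sum_ffun_prod1 bit_prob_sum1). Qed.

Lemma mut_prob_ge0 y : 0 <= p <= 1 -> 0 <= mut_prob c x y.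
Proof. by case/andP=> p0 p1; apply: prodr_ge0 => i _; case: ifP; rewrite ?subr_ge0. Qed.

Lemma mut_prob_self : mut_prob c x x = (1 - p) ^+ n.
Proof.
rewrite /mut_prob (eq_bigr (fun=> 1 - p)) => [|i _]; last by rewrite eqxx.
by rewrite prodr_const card_ord.
Qed.

Lemma expected_lost_zeros :
  \sum_y mut_prob c x y * (lost_zeros x y)%:R = (zeros x)%:R * p.
Proof.
transitivity (\sum_j \sum_(y : bits n) (\prod_i bit_prob i (y i)) * (~~ x j && y j)%:R).
  rewrite exchange_big /=; apply: eq_bigr => y _.
  by rewrite /lost_zeros card_set_sumb natr_sum mulr_sumr.
rewrite /zeros card_set_sumb natr_sum mulr_suml; apply: eq_bigr => j _.
rewrite (sum_ffun_prod_mul_coord bit_prob_sum1 (fun b => (~~ x j && b)%:R)).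
by rewrite big_bool /bit_prob; case: (x j) => /=; ring.
Qed.

Lemma prob_pure_gain :
  \sum_y mut_prob c x y * (pure_gain x y)%:R = (1 - p) ^+ (zeros x) - (1 - p) ^+ n.
Proof.
have gainE y : (pure_gain x y)%:R = \prod_i (x i || ~~ y i)%:R - (y == x)%:R :> R.
  rewrite prodr_natb -lost_zeros_eq0 /pure_gain.
  case: (eqVneq y x) => [-> | _]; last by rewrite andbT subr0.
  have -> : lost_zeros x x == 0%N by rewrite lost_zeros_eq0; apply/forallP => i; case: (x i).
  by rewrite andbF subrr.
rewrite (eq_bigr _ (fun y _ => congr1 _ (gainE y))).
under eq_bigr do rewrite mulrBr mulr_natr mulrb.
rewrite sumrB -big_mkcond big_pred1_eq mut_prob_self.
rewrite (sum_ffun_prod_mul_prod bit_prob (fun i b => (x i || ~~ b)%:R)).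
rewrite /zeros -prodr_const; congr (_ - _); rewrite [RHS]big_mkcond; apply: eq_bigr => i _.
by rewrite inE big_bool /bit_prob; case: (x i) => /=; ring.
Qed.

Lemma prob_pure_gain_ge :
  0 < c -> c <= n%:R ->
  (zeros x)%:R * p <= 1 / 2 -> (zeros x)%:R * p <= c / 2 ->
  c / (2 * (2 + c)) <= (1 - p) ^+ (zeros x) - (1 - p) ^+ n.
Proof.
move=> c_gt0 c_le_n Zp_le Zp_le_c.
have n_gt0 : 0 < n%:R :> R by apply: lt_le_trans c_le_n.
have np : n%:R * p = c by rewrite mulrC mulfVK ?gt_eqF.
have p0 : 0 <= p by rewrite divr_ge0 // ltW.
have p1 : p <= 1 by rewrite ler_pdivrMr ?mul1r.
have Zn : (zeros x <= n)%N by apply: leq_trans (max_card _) _; rewrite card_ord.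
set m := (n - zeros x)%N.
have mp : c / 2 <= m%:R * p by rewrite natrB // mulrBl np; lra.
have -> : (1 - p) ^+ n = (1 - p) ^+ zeros x * (1 - p) ^+ m by rewrite -exprD subnKC.
(* [v >= 1 - Z p >= 1/2] and [u <= 1 / (1 + (n - Z) p) <= 2 / (2 + c)]. *)
have v_ge := bernoulli_subrX_ge p0 p1 (zeros x).
have u_le := bernoulli_subrX_mulD_le1 p0 p1 m.
set v := (1 - p) ^+ zeros x in v_ge *; set u := (1 - p) ^+ m in u_le *.
have u0 : 0 <= u by rewrite exprn_ge0 ?subr_ge0.
have uc : u * (2 + c) <= 2.
  have : u * (c / 2) <= u * (m%:R * p) by rewrite ler_wpM2l.
  lra.
rewrite ler_pdivrMr; last by nra.
have : 0 <= v * (2 - u * (2 + c)) by apply: mulr_ge0; lra.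
have : 0 <= (v - 1 / 2) * c by apply: mulr_ge0; lra.
nra.
Qed.

End Mutation.

Lemma offspring_zeros_ge (R : numDomainType) n k (x : bits n)
    (ys : {ffun 'I_k -> bits n}) (j : 'I_k) :
  (zeros x)%:R + \prod_i (pure_gain x (ys i))%:R - \sum_i (lost_zeros x (ys i))%:R
  <= (zeros (ys j))%:R :> R.
Proof.
rewrite prodr_natb; case: (boolP [forall i, _]) => [/forallP allgain | _].
  rewrite big1 ?subr0 ?natr1 ?ler_nat ?pure_gain_zeros_lt // => i _.
  by have /andP[/eqP -> _] := allgain i.
rewrite addr0 lerBlDr (bigD1 j) //= addrA -natrD.
have := zeros_le_addl_lost x (ys j); rewrite -(ler_nat R) => /le_trans; apply.
by rewrite lerDl sumr_ge0.
Qed.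

Lemma best_set_neq0 (R : realType) n k (f : bits n -> R) (ys : {ffun 'I_k -> bits n}) :
  (0 < k)%N -> best_set f ys != set0.
Proof.
move=> k_gt0; have [i _ imax] := @arg_maxP _ _ _ (Ordinal k_gt0) xpredT (f \o ys) isT.
by apply/set0Pn; exists i; rewrite inE; apply/forallP => j; exact: imax.
Qed.

Lemma exp_next_zeros_ge (R : realType) n (c : R) k (f : bits n -> R) (x : bits n) :
  (0 < k)%N -> 0 <= c / n%:R <= 1 ->
  (zeros x)%:R + (\sum_y mut_prob c x y * (pure_gain x y)%:R) ^+ k
     - k%:R * ((zeros x)%:R * (c / n%:R)) <= exp_next_zeros c k f x.
Proof.
move=> k_gt0 p01.
pose D (i : 'I_k) y := mut_prob c x y.
have D_sum1 i : \sum_y D i y = 1 by exact: mut_prob_sum1.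
pose L (ys : {ffun 'I_k -> bits n}) : R := (zeros x)%:R
  + \prod_i (pure_gain x (ys i))%:R - \sum_i (lost_zeros x (ys i))%:R.
have mean_L : \sum_(ys : {ffun 'I_k -> bits n}) (\prod_i D i (ys i)) * L ys
    = (zeros x)%:R + (\sum_y mut_prob c x y * (pure_gain x y)%:R) ^+ k
      - k%:R * ((zeros x)%:R * (c / n%:R)).
  under eq_bigr do rewrite /L mulrBr mulrDr mulr_sumr.
  rewrite sumrB big_split /= -mulr_suml sum_ffun_prod1 // mul1r.
  rewrite (sum_ffun_prod_mul_prod D (fun _ y => (pure_gain x y)%:R)) exchange_big /=.
  under [X in _ - X]eq_bigr do rewrite (sum_ffun_prod_mul_coord D_sum1 (fun y => (lost_zeros x y)%:R)).
  by rewrite /D expected_lost_zeros prodr_const sumr_const card_ord -[_ *+ k]mulr_natl.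
rewrite -mean_L.
apply: ler_sum => ys _; apply: ler_wpM2l; first by apply: prodr_ge0 => i _; exact: mut_prob_ge0.
by apply: le_mean; [exact: best_set_neq0 | move=> j _; exact: offspring_zeros_ge].
Qed.

Lemma round_nat_gt0 (R : realType) (l : R) : 1 <= l -> (0 < round_nat l)%N.
Proof. by move=> l1; rewrite truncn_gt0; lra. Qed.

Lemma le_round_nat (R : realType) (l l' : R) : l <= l' -> (round_nat l <= round_nat l')%N.
Proof. by move=> ll'; apply: le_truncn; rewrite lerD2r. Qed.

Lemma drift_Z_ge (R : realType) n (c : R) (x : bits n) (f : bits n -> R) (lam q : R) K :
  0 <= c / n%:R <= 1 -> 1 <= lam -> (round_nat lam <= K)%N ->
  0 <= q <= 1 -> q <= \sum_y mut_prob c x y * (pure_gain x y)%:R ->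
  q ^+ K - K%:R * ((zeros x)%:R * (c / n%:R)) <= drift_Z c lam f x.
Proof.
move=> p01 lam1 kK /andP[q0 q1] q_le.
have k_gt0 := round_nat_gt0 lam1.
have := exp_next_zeros_ge f x k_gt0 p01; rewrite /drift_Z.
set P := \sum_y _; set k := round_nat lam; set Zp := _ * (c / n%:R).
have Zp0 : 0 <= Zp by case/andP: p01 => p0 _; rewrite mulr_ge0.
have qK : q ^+ K <= P ^+ k.
  apply: le_trans (ler_wiXn2l q0 q1 kK) _.
  by rewrite lerXn2r ?nnegrE // (le_trans q0).
have kK' : k%:R * Zp <= K%:R * Zp by rewrite ler_wpM2r ?ler_nat.
lra.
Qed.

Theorem mainTheorem18 (R : realType) (c F : R) :
  0 < c -> 1 < F ->
  exists eps alpha2 : R, 0 < eps /\ 0 < alpha2 /\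
    forall s : R, 0 < s ->
    exists N : nat, forall n : nat, (N <= n)%N ->
      forall (x : bits n) (lam : R) (f : bits n -> R),
        monotone_fun f ->
        1 <= lam -> lam <= F ->
        (zeros x)%:R <= eps * n%:R ->
        alpha2 <= drift_Z c lam f x.
Proof.
move=> c_gt0 F_gt1.
set K := round_nat F; set q := c / (2 * (2 + c)); set a := q ^+ K / 2.
have q0 : 0 < q by rewrite divr_gt0 //; nra.
have q1 : q <= 1 by rewrite ler_pdivrMr ?mul1r; nra.
have a0 : 0 < a by rewrite divr_gt0 // exprn_gt0.
have a1 : a <= 1 / 2 by have := exprn_ile1 K (ltW q0) q1; rewrite /a; lra.
have K0 : 0 <= K%:R :> R := ler0n _ _.
have D0 : 0 < (K%:R + 2) * (c + 2) by nra.
set eps := a / ((K%:R + 2) * (c + 2)).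
have epsE : eps * ((K%:R + 2) * (c + 2)) = a by rewrite mulfVK ?gt_eqF.
have eps0 : 0 < eps by rewrite divr_gt0.
exists eps, a; do 2 split => //; move=> _ _.
exists (Num.truncn c).+2 => n n_big x lam f _ lam1 lamF Zn.
have c_le_n : c <= n%:R by rewrite (le_trans (ltW (truncnS_gt c))) // ler_nat ltnW.
have n0 : 0 < n%:R :> R by apply: lt_le_trans c_le_n.
have Zp : (zeros x)%:R * (c / n%:R) <= eps * c.
  by rewrite mulrA ler_pdivrMr // mulrAC; apply: ler_wpM2r => //; exact: ltW.
have p01 : 0 <= c / n%:R <= 1.
  by apply/andP; split; [rewrite divr_ge0 // ltW | rewrite ler_pdivrMr ?mul1r].
have q_le : q <= \sum_y mut_prob c x y * (pure_gain x y)%:R.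
  by rewrite prob_pure_gain prob_pure_gain_ge //; nra.
have := drift_Z_ge f p01 lam1 (le_round_nat lamF) (introT andP (conj (ltW q0) q1)) q_le.
have : K%:R * ((zeros x)%:R * (c / n%:R)) <= a by nra.
rewrite /a; lra.
Qed.
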